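(* Let $\phi:\mathbb{N}_0\to\mathbb{N}_0$ satisfy $\phi(0)=0$ and $\phi(x)\neq x$ for all $x\in\mathbb{N}$, and let $n\ge2$. If the local function $\phi_n$ has no cycle, then $M_n(\phi)^k\cap M_n(\phi)^l=0$ for all $k\ne l$ with $k,l\ge1$.
   Context: $\mathbb{N}=\{1,2,\dots\}$, $\mathbb{N}_0=\mathbb{N}\cup\{0\}$, $D_n=\{1,\dots,n\}$, $D_{n,0}=D_n\cup\{0\}$. The local function $\phi_n:D_{n,0}\to D_{n,0}$ is $\phi_n(x)=\phi(x)$ if $x\in D_n$ and $\phi(x)\in D_n$, and $\phi_n(x)=0$ otherwise. ''$\phi_n$ has no cycle'' means there are no $m\ge2$ and $x\in D_n$ with $\phi_n^m(x)=x$. For $1\le i\le n$, $\mathbf{e}_i$ is the $i$-th unit vector in $\mathbb{Z}^n$ and $\mathbf{e}_0$ the zero vector. $M_n(\phi)$ is the $n\times n$ matrix whose $j$-th column is $\mathbf{e}_{\phi_n(j)}$. For $n\times n$ matrices $A,B$, $A\cap B$ is the number of index pairs $(i,j)$ with $A_{ij}B_{ij}\neq0$. *)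

From mathcomp Require Import all_boot all_order all_algebra.
Set Implicit Arguments. Unset Strict Implicit. Unset Printing Implicit Defensive.
Import GRing.Theory.
Local Open Scope ring_scope.

Definition inDn (n x : nat) : bool := (1 <= x <= n)%N.

(* local function phi_n on D_{n,0}; values outside D_n are sent to 0 as well *)
Definition phi_loc (phi : nat -> nat) (n : nat) (x : nat) : nat :=
  if inDn n x && inDn n (phi x) then phi x else 0%N.

Definition no_cycle (phi : nat -> nat) (n : nat) : Prop :=
  ~ exists m x : nat, (2 <= m)%N /\ inDn n x /\ iter m (phi_loc phi n) x = x.

(* M_n(phi): n x n integer matrix whose j-th column (1-based) is e_{phi_n(j)};
   with 0-based ordinals i, j the entry is 1 iff phi_n(j+1) = i+1. *)
Definition Mphi (phi : nat -> nat) (n : nat) : 'M[int]_n :=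
  \matrix_(i < n, j < n) (if phi_loc phi n j.+1 == i.+1 then 1 else 0).

(* k-th power of a square matrix (valid for every size n) *)
Definition mxpow (n : nat) (A : 'M[int]_n) (k : nat) : 'M[int]_n :=
  iter k (mulmx A) 1%:M.

(* A ∩ B = number of index pairs (i,j) with A_ij * B_ij <> 0 *)
Definition mx_cap (n : nat) (A B : 'M[int]_n) : nat :=
  #|[set p : 'I_n * 'I_n | A p.1 p.2 * B p.1 p.2 != 0]|.

(** If [x] in [D_n] reached the same point [y > 0] after [k < l] steps of
    [phi_n], then [y] would lie on a cycle of [phi_n] of length [l - k], hence
    also of length [2 (l - k) >= 2]. So distinct positive powers of [phi_n]
    never send a point of [D_n] to the same nonzero point, and since
    [M_n(phi)^k] is the 0/1 matrix of [phi_n^k] on [D_n], distinct powers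
    have disjoint supports. *)
From mathcomp Require Import all_boot all_order all_algebra.
Import GRing.Theory.
Local Open Scope ring_scope.

Lemma phi_loc_le phi n x : (phi_loc phi n x <= n)%N.
Proof. by rewrite /phi_loc; case: ifP => // /andP[_ /andP[]]. Qed.

Lemma iter_phi_loc_le phi n k x : (x <= n)%N -> (iter k (phi_loc phi n) x <= n)%N.
Proof. by case: k => [|k] //= _; apply: phi_loc_le. Qed.

Lemma mxpow_Mphi phi n k (i j : 'I_n) :
  mxpow (Mphi phi n) k i j = (iter k (phi_loc phi n) j.+1 == i.+1)%:R.
Proof.
elim: k i j => [|k IHk] i j.
  by rewrite /mxpow /= mxE eqSS eq_sym.
rewrite /mxpow /= -/(mxpow _ k) mxE.
under eq_bigr => m _ do rewrite IHk mxE mulr_natr.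
have := @iter_phi_loc_le phi n k j.+1 (ltn_ord j).
case: (iter k (phi_loc phi n) j.+1) => [|m0] le_m0n.
  by rewrite big1.
rewrite (bigD1 (Ordinal le_m0n)) //= eqxx mulr1n big1 ?addr0; first by case: eqP.
move=> m ne_m; suff /negbTE-> : m0.+1 != m.+1 by rewrite mulr0n.
by apply: contra ne_m => /eqP[eq_m0]; apply/eqP/val_inj.
Qed.

Lemma iter_sub_fixed {T : Type} {f : T -> T} {k l x} :
  (k <= l)%N -> iter k f x = iter l f x -> iter (l - k) f (iter k f x) = iter k f x.
Proof. by move=> le_kl eq_kl; rewrite -iterD subnK. Qed.

Lemma no_cycle_iter_neq phi n k l x :
  no_cycle phi n -> inDn n x -> k != l -> (0 < iter k (phi_loc phi n) x)%N ->
  iter k (phi_loc phi n) x != iter l (phi_loc phi n) x.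
Proof.
move=> noc x_Dn ne_kl y_gt0; apply/eqP => eq_kl.
wlog lt_kl : k l ne_kl y_gt0 eq_kl / (k < l)%N.
  move=> gen; case: (ltngtP k l) => [lt_kl|lt_lk|eq_kl'].
  - exact: (gen k l).
  - by apply: (gen l k); rewrite 1?eq_sym -?eq_kl.
  - by rewrite eq_kl' eqxx in ne_kl.
set y := iter k (phi_loc phi n) x in y_gt0 eq_kl.
have y_fix := iter_sub_fixed (ltnW lt_kl) eq_kl : iter (l - k) _ y = y.
apply: noc; exists ((l - k) + (l - k))%N, y; split; last split.
- by move: lt_kl; rewrite -subn_gt0; case: (l - k)%N => // d _; rewrite addSn addnS.
- by rewrite /inDn y_gt0 iter_phi_loc_le //; case/andP: x_Dn.
- by rewrite iterD !y_fix.
Qed.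

Lemma mx_cap_eq0 n (A B : 'M[int]_n) :
  (forall i j, A i j = 0 \/ B i j = 0) -> mx_cap A B = 0%N.
Proof.
move=> AB0; apply/eqP; rewrite cards_eq0; apply/eqP/setP => -[i j].
by rewrite !inE /=; case: (AB0 i j) => ->; rewrite ?mulr0 ?mul0r eqxx.
Qed.

Theorem proposition3p5 (phi : nat -> nat) (n : nat) :
  phi 0%N = 0%N ->
  (forall x : nat, (0 < x)%N -> phi x <> x) ->
  (2 <= n)%N ->
  no_cycle phi n ->
  forall k l : nat, (1 <= k)%N -> (1 <= l)%N -> k <> l ->
    mx_cap (mxpow (Mphi phi n) k) (mxpow (Mphi phi n) l) = 0%N.
Proof.
move=> _ _ _ noc k l _ _ ne_kl; apply: mx_cap_eq0 => i j.
rewrite !mxpow_Mphi.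
have j_Dn : inDn n j.+1 by rewrite /inDn ltn_ord.
have [/eqP Ek|] := boolP (_ == i.+1); last by left.
right; suff /negbTE-> : iter l (phi_loc phi n) j.+1 != i.+1 by [].
rewrite -Ek eq_sym; apply: no_cycle_iter_neq; rewrite ?Ek //.
exact/eqP.
Qed.
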